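(* Let $\Omega=[0,1]^d$ and let $\mathbb{P}$ be a probability measure for a pair $(X,Y)$ with $X\in\Omega$ and $Y\in\{0,1\}$. Let $T$ and $T'$ be two classification trees on $\Omega$, each having $k$ leaf nodes; denote the leaf nodes of $T$ by $A_1,\dots,A_k$ and those of $T'$ by $A_1',\dots,A_k'$. If for some $\epsilon\ge 0$ $$\sup_{1\le j\le k}\mathbb{P}(A_j\,\triangle\,A_j')\le \epsilon,$$ then $$|I(T,\mathbb{P})-I(T',\mathbb{P})|\le 5k\epsilon .$$
   Context: A classification tree on $\Omega$ is obtained by recursively splitting $\Omega$ with axis-aligned cuts $\{X[j]\le z\}$ / $\{X[j]>z\}$; its leaf nodes are hyperrectangles forming a partition of $\Omega$. For a set $A\subset\Omega$, $\mathbb{P}(A)$ denotes $\mathbb{P}(X\in A)$, $\triangle$ denotes symmetric set difference, and $\eta(A)=\mathbb{E}_{\mathbb{P}}(Y\mid X\in A)$. The (Gini) impurity of a node $A$ is $I(A,\mathbb{P})=2\eta(A)(1-\eta(A))$, and the impurity of a tree $T$ with leaf nodes $A_1,\dots,A_k$ is $I(T,\mathbb{P})=\sum_{l=1}^k \mathbb{P}(A_l)\,I(A_l,\mathbb{P})$ (a leaf with $\mathbb{P}(A_l)=0$ contributes $0$). *)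

From HB Require Import structures.
From mathcomp Require Import all_boot all_order all_algebra.
From mathcomp Require Import all_classical all_reals all_analysis.
Set Implicit Arguments. Unset Strict Implicit. Unset Printing Implicit Defensive.
Import Order.TTheory GRing.Theory Num.Theory.
Local Open Scope classical_set_scope.
Local Open Scope ring_scope.

Definition unitcube (R : realType) (d : nat) : set ('I_d -> R) :=
  [set x | forall i, 0 <= x i <= 1].

(* Classification trees: recursive axis-aligned splits {x j <= z} / {x j > z}. *)
Inductive ctree (R : realType) (d : nat) : Type :=
| CLeaf : ctree R d
| CNode : 'I_d -> R -> ctree R d -> ctree R d -> ctree R d.

Fixpoint leaves_from (R : realType) (d : nat) (A : set ('I_d -> R))
  (t : ctree R d) : seq (set ('I_d -> R)) :=
  match t with
  | CLeaf => [:: A]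
  | CNode j z l r =>
      leaves_from (A `&` [set x | x j <= z]) l ++
      leaves_from (A `&` [set x | z < x j]) r
  end.

Definition leaves (R : realType) (d : nat) (t : ctree R d) :=
  @leaves_from R d (@unitcube R d) t.

Definition symdiff (U : Type) (A B : set U) : set U := (A `\` B) `|` (B `\` A).

Section Impurity.
Context (dT : measure_display) (T : measurableType dT) (R : realType) (d : nat).
Context (P : probability T R) (X : T -> ('I_d -> R)) (Y : T -> bool).

Definition PX (A : set ('I_d -> R)) : R := fine (P (X @^-1` A)).

Definition eta (A : set ('I_d -> R)) : R :=
  fine (P (X @^-1` A `&` [set w | Y w])) / PX A.

Definition node_impurity (A : set ('I_d -> R)) : R := 2 * eta A * (1 - eta A).

Definition tree_impurity (t : ctree R d) : R :=
  \sum_(A <- leaves t) (if PX A == 0 then 0 else PX A * node_impurity A).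
End Impurity.

From Pilot Require Import Defs.
From HB Require Import structures.
From mathcomp Require Import all_boot all_order all_algebra.
From mathcomp Require Import all_classical all_reals all_analysis.
From mathcomp Require Import ring lra.
Import Order.TTheory GRing.Theory Num.Theory.
Local Open Scope classical_set_scope.
Local Open Scope ring_scope.

Set Implicit Arguments.
Unset Strict Implicit.
Unset Printing Implicit Defensive.

(* With q = P(A, Y = 1) and r = P(A, Y = 0), a leaf contributes
   P(A) I(A) = 2 q r / (q + r), twice the parallel sum of q and r.  The
   parallel sum is nondecreasing and 1-Lipschitz in each argument, so
   shrinking A to A ∩ A' changes the contribution by at most 2 P(A \ A');
   going through A ∩ A' bounds the change between A and A' by 2 P(A △ A').
   Summing over the k leaves gives 2kε <= 5kε. *)

Section ParallelSum.
Variable R : realFieldType.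
Implicit Types x y a b : R.

Definition parallel_sum x y : R := x * y / (x + y).

Lemma parallel_sumC x y : parallel_sum x y = parallel_sum y x.
Proof. by rewrite /parallel_sum (mulrC x) (addrC x). Qed.

Lemma parallel_sumDl x y a : 0 <= x -> 0 <= y -> 0 <= a ->
  parallel_sum x y <= parallel_sum (x + a) y <= parallel_sum x y + a.
Proof.
move=> x_ge0 y_ge0 a_ge0; have [->|y_neq0] := eqVneq y 0.
  by rewrite /parallel_sum !(mulr0, mul0r, add0r) lexx.
have y_gt0 : 0 < y by rewrite lt0r y_neq0.
have xy_gt0 : 0 < x + y by lra.
have xay_gt0 : 0 < x + a + y by lra.
have den_gt0 : 0 < (x + y) * (x + a + y) by exact: mulr_gt0.
have -> : parallel_sum (x + a) y =
          parallel_sum x y + a * y ^+ 2 / ((x + y) * (x + a + y)).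
  by rewrite /parallel_sum; field; rewrite !lt0r_neq0.
have incr_ge0 : 0 <= a * y ^+ 2 / ((x + y) * (x + a + y)).
  by rewrite divr_ge0 ?mulr_ge0 ?sqr_ge0 // ltW.
have incr_le : a * y ^+ 2 / ((x + y) * (x + a + y)) <= a.
  by rewrite ler_pdivrMr // ler_wpM2l //; nra.
by apply/andP; split; lra.
Qed.

Lemma parallel_sumDD x y a b : 0 <= x -> 0 <= y -> 0 <= a -> 0 <= b ->
  parallel_sum x y <= parallel_sum (x + a) (y + b) <= parallel_sum x y + (a + b).
Proof.
move=> x_ge0 y_ge0 a_ge0 b_ge0.
have /andP[lo1 hi1] := parallel_sumDl x_ge0 y_ge0 a_ge0.
have xa_ge0 : 0 <= x + a by lra.
have /andP[lo2 hi2] := parallel_sumDl y_ge0 xa_ge0 b_ge0.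
rewrite !(parallel_sumC _ (x + a)) in lo2 hi2.
by apply/andP; split; lra.
Qed.

End ParallelSum.

Section WeightedGini.
Context (dT : measure_display) (T : measurableType dT) (R : realType).
Context (P : probability T R) (Y1 : set T).
Hypothesis mY1 : measurable Y1.

Definition mass (S : set T) : R := fine (P S).

Lemma mass_ge0 S : 0 <= mass S.
Proof. exact/fine_ge0/measure_ge0. Qed.

Lemma mass_split S U : measurable S -> measurable U ->
  mass S = mass (S `\` U) + mass (S `&` U).
Proof.
move=> mS mU; rewrite /mass (measureDI P mS mU) fineD //.
  exact/fin_num_measure/measurableD.
exact/fin_num_measure/measurableI.
Qed.

Lemma mass_symdiff S U : measurable S -> measurable U ->
  mass (symdiff S U) = mass (S `\` U) + mass (U `\` S).
Proof.
move=> mS mU; have mSU : measurable (symdiff S U).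
  by apply: measurableU; apply: measurableD.
rewrite (mass_split mSU mS) addrC; congr (mass _ + mass _);
  by apply/seteqP; split => w; rewrite /symdiff /=; tauto.
Qed.

Definition weighted_gini (S : set T) : R :=
  2 * parallel_sum (mass (S `&` Y1)) (mass (S `\` Y1)).

Lemma weighted_gini_subset S U : measurable S -> measurable U -> U `<=` S ->
  weighted_gini U <= weighted_gini S <= weighted_gini U + 2 * mass (S `\` U).
Proof.
move=> mS mU US; have mSU : measurable (S `\` U) by exact: measurableD.
have [posI posD negI negD] : [/\ S `&` Y1 `&` U = U `&` Y1,
    (S `&` Y1) `\` U = (S `\` U) `&` Y1, (S `\` Y1) `&` U = U `\` Y1
  & (S `\` Y1) `\` U = (S `\` U) `\` Y1].
  by split; apply/seteqP; split => w /=; have := US w; tauto.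
have pos := mass_split (measurableI _ _ mS mY1) mU.
have neg := mass_split (measurableD mS mY1) mU.
rewrite posI posD in pos; rewrite negI negD in neg.
have diff := mass_split mSU mY1.
rewrite /weighted_gini pos neg !(addrC (mass ((S `\` U) `&` _))).
have /andP[lo hi] := parallel_sumDD (mass_ge0 (U `&` Y1)) (mass_ge0 (U `\` Y1))
  (mass_ge0 ((S `\` U) `&` Y1)) (mass_ge0 ((S `\` U) `\` Y1)).
by apply/andP; split; lra.
Qed.

Lemma weighted_gini_dist S U : measurable S -> measurable U ->
  `|weighted_gini S - weighted_gini U| <= 2 * mass (symdiff S U).
Proof.
move=> mS mU; have mSU : measurable (S `&` U) by exact: measurableI.
have /andP[loS hiS] := weighted_gini_subset mS mSU (@subIsetl _ S U).
have /andP[loU hiU] := weighted_gini_subset mU mSU (@subIsetr _ S U).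
have SU : S `\` (S `&` U) = S `\` U by apply/seteqP; split => w /=; tauto.
have US : U `\` (S `&` U) = U `\` S by apply/seteqP; split => w /=; tauto.
rewrite SU in hiS; rewrite US in hiU; rewrite mass_symdiff // ler_norml.
by apply/andP; split; lra.
Qed.

End WeightedGini.

Section TreeImpurity.
Context (dT : measure_display) (T : measurableType dT) (R : realType) (d : nat).
Context (P : probability T R) (X : T -> ('I_d -> R)) (Y : T -> bool).
Hypothesis hX : forall i : 'I_d, measurable_fun setT (fun w => X w i).
Hypothesis hY : measurable [set w | Y w].

Lemma leaf_impurity_weighted_gini A : measurable (X @^-1` A) ->
  (if PX P X A == 0 then 0 else PX P X A * node_impurity P X Y A) =
  weighted_gini P [set w | Y w] (X @^-1` A).
Proof.
move=> mA; rewrite /node_impurity /Defs.eta /weighted_gini /parallel_sum.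
have : PX P X A = mass P (X @^-1` A `&` [set w | Y w]) +
                  mass P (X @^-1` A `\` [set w | Y w]).
  by rewrite addrC; exact: mass_split.
rewrite /mass; set q := fine _; set r := fine _ => ->.
(* a null leaf gives 0 on both sides, on the right because x / 0 = 0 *)
by have [->|qr_neq0] := eqVneq (q + r) 0; [rewrite invr0 !mulr0|field].
Qed.

Lemma measurable_coord_le (j : 'I_d) (z : R) : measurable [set w | X w j <= z].
Proof.
have := hX j measurableT (measurable_itv `]-oo, z]); rewrite setTI.
by congr measurable; apply/seteqP; split => w /=; rewrite in_itv.
Qed.

Lemma measurable_coord_gt (j : 'I_d) (z : R) : measurable [set w | z < X w j].
Proof.
have := hX j measurableT (measurable_itv `]z, +oo[); rewrite setTI.
by congr measurable; apply/seteqP; split => w /=; rewrite in_itv /= andbT.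
Qed.

Lemma measurable_leaves_from (t : ctree R d) A : measurable (X @^-1` A) ->
  forall i, measurable (X @^-1` nth set0 (leaves_from A t) i).
Proof.
elim: t A => [|j z l IHl r IHr] A mA i /=.
  by case: i => [|i] //=; rewrite nth_nil preimage_set0.
rewrite nth_cat; case: ifP => _.
  exact/IHl/(measurableI _ _ mA (measurable_coord_le j z)).
exact/IHr/(measurableI _ _ mA (measurable_coord_gt j z)).
Qed.

Hypothesis hXO : forall w, X w \in @unitcube R d.

Lemma measurable_leaves (t : ctree R d) i :
  measurable (X @^-1` nth set0 (leaves t) i).
Proof.
apply: measurable_leaves_from; suff -> : X @^-1` @unitcube R d = setT by [].
by apply/seteqP; split => w // _; have := hXO w; rewrite inE.
Qed.

Lemma tree_impurity_weighted_gini (t : ctree R d) k : size (leaves t) = k ->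
  tree_impurity P X Y t =
  \sum_(i < k) weighted_gini P [set w | Y w] (X @^-1` nth set0 (leaves t) i).
Proof.
move=> <-; rewrite /tree_impurity (big_nth set0) big_mkord.
apply: eq_bigr => i _.
exact/leaf_impurity_weighted_gini/measurable_leaves.
Qed.

Lemma tree_impurity_dist (t t' : ctree R d) k eps :
  size (leaves t) = k -> size (leaves t') = k ->
  (forall j : 'I_k,
     PX P X (symdiff (nth set0 (leaves t) j) (nth set0 (leaves t') j)) <= eps) ->
  `|tree_impurity P X Y t - tree_impurity P X Y t'| <= 2 * k%:R * eps.
Proof.
move=> hk hk' hsup; rewrite !(tree_impurity_weighted_gini _ (k := k)) // -sumrB.
apply: le_trans (ler_norm_sum _ _ _) _.
have -> : 2 * k%:R * eps = \sum_(i < k) (2 * eps).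
  by rewrite sumr_const card_ord mulrAC mulr_natr.
apply: ler_sum => i _.
have mL := measurable_leaves t i; have mL' := measurable_leaves t' i.
apply: le_trans (weighted_gini_dist P hY mL mL') _.
by rewrite ler_pM2l //; exact: hsup.
Qed.

End TreeImpurity.

Theorem mainTheorem1 (dT : measure_display) (T : measurableType dT) (R : realType)
  (d : nat) (P : probability T R) (X : T -> ('I_d -> R)) (Y : T -> bool)
  (hX : forall i : 'I_d, measurable_fun setT (fun w => X w i))
  (hY : measurable [set w | Y w])
  (hXO : forall w, X w \in @unitcube R d)
  (k : nat) (t t' : ctree R d)
  (hk : size (leaves t) = k) (hk' : size (leaves t') = k)
  (eps : R) (heps : 0 <= eps)
  (hsup : forall j : 'I_k,
     PX P X (symdiff (nth set0 (leaves t) j) (nth set0 (leaves t') j)) <= eps) :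
  `| tree_impurity P X Y t - tree_impurity P X Y t' | <= 5 * k%:R * eps.
Proof.
apply: le_trans (tree_impurity_dist hX hY hXO hk hk' hsup) _.
by rewrite -!mulrA ler_wpM2r ?mulr_ge0 // ler_nat.
Qed.
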